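(* Let $k,n,m$ be positive integers and let $s$ be an even integer with $2\le s\le m$. Let $L_\downarrow=\{5,6,\dots,\tfrac{3}{2}s+4\}$ and $L_\uparrow=\{\tfrac{3}{2}m+4kn+5,\dots,\tfrac{3}{2}m+4kn+\tfrac{3}{2}s+4\}$. Let $\mathcal{C}$ be the temporal graph whose vertex set consists of $3s$ vertices $a_1,a_2,\dots,a_{3s}$ arranged on a cycle, and whose time edges are $(\{a_p,a_{p+1}\},t)$ for all $p\in\{1,\dots,3s\}$ (indices modulo $3s$) and all $t\in L_\downarrow\cup L_\uparrow$, with maximum label $T=3m+4kn+4$. Then $\mathcal{C}$ admits a strict temporal spanner with $6s-3$ time edges, and $\mathcal{C}$ admits no strict temporal spanner with fewer than $6s-3$ time edges.
   Context: A temporal graph is a triple $(V,\mathcal{E},T)$ with time edges $\mathcal{E}\subseteq\binom{V}{2}\times\{1,\dots,T\}$. A strict temporal path is a sequence of time edges $(e_1,t_1),\dots,(e_r,t_r)\in\mathcal{E}$ such that $e_1,\dots,e_r$ form a static path and $t_1<\dots<t_r$. A temporal graph is strictly temporally connected if every vertex has a strict temporal path to every other vertex. A strict temporal spanner of a strictly temporally connected $(V,\mathcal{E},T)$ is a strictly temporally connected $(V,\mathcal{E}',T')$ with $\mathcal{E}'\subseteq\mathcal{E}$ and $T'\le T$; its size is $|\mathcal{E}'|$. (In the paper, this cycle is the edge selection gadget built for a pair of color classes with $s$ edges between them, where $m$ is the maximum such number of edges, $k$ the number of colors and $n$ the size of each color class.) *)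

From mathcomp Require Import all_boot.
Set Implicit Arguments. Unset Strict Implicit. Unset Printing Implicit Defensive.

(* A set of time edges over vertex type V with labels in {0..T}
   (type 'I_T.+1); a time edge is (e, t) with e a set of vertices
   (in the graphs below always a 2-element set) and t its label. *)
Notation time_edges V T := {set {set V} * 'I_T.+1}.

Definition strict_temporal_path (V : finType) (T : nat) (E : time_edges V T)
    (u v : V) : Prop :=
  exists (vs : seq V) (ts : seq 'I_T.+1),
    [/\ size ts = size vs,
        uniq (u :: vs),
        last u vs = v,
        sorted ltn (map (@nat_of_ord _) ts)
      & forall i, i < size vs ->
          ([set nth u (u :: vs) i; nth u vs i], nth ord0 ts i) \in E].

Definition strictly_temporally_connected (V : finType) (T : nat)
    (E : time_edges V T) : Prop :=
  forall u v : V, u != v -> strict_temporal_path E u v.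

(* A strict temporal spanner of E (of size #|E'|): a strictly temporally
   connected subset E' of the time edges.  (The bound T' <= T of the paper
   is automatically satisfied by taking T' = T, and any T' <= T merely
   restricts the admissible E'.) *)
Definition strict_temporal_spanner (V : finType) (T : nat)
    (E E' : time_edges V T) : Prop :=
  E' \subset E /\ strictly_temporally_connected E'.

Definition cyc_succ (N : nat) (p : 'I_N) : 'I_N :=
  Ordinal (ltn_pmod p.+1 (leq_ltn_trans (leq0n p) (ltn_ord p))).

Definition in_Ldown (s t : nat) : bool := (5 <= t) && (t <= 3 * s %/ 2 + 4).
Definition in_Lup (k n m s t : nat) : bool :=
  (3 * m %/ 2 + 4 * k * n + 5 <= t) && (t <= 3 * m %/ 2 + 4 * k * n + 3 * s %/ 2 + 4).

Definition cycT (k n m : nat) : nat := 3 * m + 4 * k * n + 4.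

(* The cycle gadget C on vertices a_0, ..., a_(3s-1) (= 'I_(3*s)). *)
Definition cycleE (k n m s : nat) : time_edges 'I_(3 * s) (cycT k n m) :=
  [set et : {set 'I_(3 * s)} * 'I_(cycT k n m).+1 |
     [exists p : 'I_(3 * s), et.1 == [set p; cyc_succ p]]
     && (in_Ldown s et.2 || in_Lup k n m s et.2)].

From mathcomp Require Import all_boot zify.
Set Implicit Arguments. Unset Strict Implicit. Unset Printing Implicit Defensive.

(* Upper bound: drop the cycle edge {a_(3s), a_1} and label the remaining path twice, once
   increasingly in each direction.  With the labels of [spanner_label] both labellings fit into
   L_down and L_up and they share only the label of the middle edge, so 2 (3s - 1) - 1 = 6s - 3
   time edges suffice.
   Lower bound: a strict temporal path in a cycle runs along one of the two arcs between its ends,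
   so connectivity only depends on the sequence of label sets of the cycle edges.  By induction on
   the length n >= 5 of the cycle, such a sequence carries at least 2n - 3 labels: if an edge has
   no label, the rest is a path, on which every edge is labelled and at most one edge carries a
   single label; an edge with at least two labels can be contracted; and a cycle with one label
   per edge is never connected.  The cycles of length 5 are settled by case analysis on the
   relative order of the labels. *)

(* [ascending t l]: a strict temporal walk, starting at time [t] or later, can cross in turn
   edges whose label sets are the members of [l]. *)
Fixpoint ascending (t : nat) (l : seq (seq nat)) : bool :=
  if l is Q :: l' then has (fun x => (t <= x) && ascending x.+1 l') Q else true.

Lemma ascending_le t1 t2 l : t1 <= t2 -> ascending t2 l -> ascending t1 l.
Proof.
case: l => [//|Q l] /= le_t /hasP [x xQ /andP [le_x asc]].
by apply/hasP; exists x; rewrite ?(leq_trans le_t le_x).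
Qed.

Lemma ascending_skip t x Q y : ascending t (x ++ Q :: y) -> ascending t (x ++ y).
Proof.
elim: x t => [|R x IH] t /=.
  by case/hasP=> z _ /andP [le_z]; apply: ascending_le; apply: leqW.
by case/hasP=> z zR /andP [le_z /IH asc]; apply/hasP; exists z; rewrite ?le_z.
Qed.

Lemma ascending_cat_nil t x y : ascending t (x ++ [::] :: y) = false.
Proof. by elim: x t => [|Q x IH] t //=; apply/hasPn => z _; rewrite IH andbF. Qed.

Lemma ascending_rcons1 t m b : ascending t (rcons m [:: b]) -> t <= b.
Proof.
elim: m t => [|Q m IH] t /=; first by rewrite orbF => /andP [].
by case/hasP=> z _ /andP [le_z /IH]; lia.
Qed.

Lemma ascending_ends t a m b : ascending t ([:: a] :: rcons m [:: b]) -> a < b.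
Proof. by rewrite /= orbF => /andP [_ /ascending_rcons1]. Qed.

Lemma ascending_of_sorted t ts l :
    sorted ltn ts -> size ts = size l -> (forall x, x \in ts -> t <= x) ->
    (forall i, i < size l -> nth 0 ts i \in nth [::] l i) -> ascending t l.
Proof.
elim: l ts t => [//|Q l IH] [//|x ts] t /= sorted_ts [size_ts] le_t mem_ts.
apply/hasP; exists x; first exact: (mem_ts 0).
rewrite le_t ?mem_head //=; apply: (IH ts) => [||y y_ts|i lt_i].
- exact: path_sorted sorted_ts.
- exact: size_ts.
- exact: (allP (order_path_min ltn_trans sorted_ts)).
- exact: (mem_ts i.+1).
Qed.

(* [ls] lists the label sets of the edges of a cycle in cyclic order.  Splitting a
   rotation of [ls] as [x ++ y] picks two distinct vertices; they are joined
   clockwise through [x] and counterclockwise through [rev y]. *)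
Definition cycle_connected (ls : seq (seq nat)) : Prop :=
  forall r x y, rot r ls = x ++ y -> x != [::] -> y != [::] ->
    ascending 0 x || ascending 0 (rev y).

Definition path_connected (l : seq (seq nat)) : Prop :=
  forall x y z, l = x ++ y ++ z -> y != [::] -> ascending 0 y && ascending 0 (rev y).

Lemma cycle_connected_rot j ls : cycle_connected ls -> cycle_connected (rot j ls).
Proof. by move=> conn r x y; rewrite rot_rot_add; apply: conn. Qed.

Lemma cycle_connected_rot_to ls Q : Q \in ls -> cycle_connected ls ->
  exists2 l : seq (seq nat), perm_eq (rcons l Q) ls & cycle_connected (rcons l Q).
Proof.
case/rot_to=> i l rot_ls conn; exists l.
  by rewrite -rot1_cons -rot_ls perm_rot perm_rot.
by rewrite -rot1_cons -rot_ls; do 2!apply: cycle_connected_rot.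
Qed.

Lemma cycle_connected_contract l Q : cycle_connected (rcons l Q) -> cycle_connected l.
Proof.
move=> conn r x y; rewrite rot_minn /rot; set r' := minn r (size l).
set w := drop r' l; set z := take r' l => wz x0 y0.
have rotQ : rot r' (rcons l Q) = w ++ Q :: z.
  have le_r' : r' <= size l by rewrite geq_minr.
  by rewrite /rot drop_rcons // cat_rcons -cats1 takel_cat.
have ew : w = take (size w) (x ++ y) by rewrite -wz take_size_cat.
have ez : z = drop (size w) (x ++ y) by rewrite -wz drop_size_cat.
move: rotQ; set p := size w; rewrite {}ew {}ez take_cat drop_cat.
case: ltnP => [lt_px|le_xp] rotQ.
- rewrite -cat_cons catA in rotQ.
  have /orP [|->] := conn r' _ y rotQ ltac:(by case: take) y0; last exact: orbT.
  by move/ascending_skip; rewrite cat_take_drop => ->.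
- rewrite -catA in rotQ.
  have /orP [->//|] := conn r' x _ rotQ x0 ltac:(by case: take).
  rewrite rev_cat rev_cons cat_rcons => /ascending_skip.
  by rewrite -rev_cat cat_take_drop => ->; rewrite orbT.
Qed.

Lemma path_connected_of_cycle l : cycle_connected (rcons l [::]) -> path_connected l.
Proof.
move=> + x y z def_l y0; rewrite def_l !rcons_cat => conn; apply/andP; split.
- have := conn (size x) y (rcons z [::] ++ x); rewrite rot_size_cat catA.
  move=> /(_ erefl y0 ltac:(by case: (z))).
  by rewrite rev_cat rev_rcons ascending_cat_nil orbF.
- have := conn (size (x ++ y)) (rcons z [::] ++ x) y; rewrite catA rot_size_cat catA.
  move=> /(_ erefl ltac:(by case: (z)) y0).
  by rewrite cat_rcons ascending_cat_nil.
Qed.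

Lemma path_connected_behead Q l : path_connected (Q :: l) -> path_connected l.
Proof. by move=> conn x y z def_l; apply: (conn (Q :: x)); rewrite def_l. Qed.

Lemma path_connected_nonempty l : path_connected l -> all (fun Q => 0 < size Q) l.
Proof.
move=> conn; apply/allP=> Q Ql; case/splitPr: Ql conn => x z conn.
by have /andP [] := conn x [:: Q] z erefl isT; case: (Q).
Qed.

Lemma path_connected_singletons l :
  path_connected l -> count (fun Q => size Q == 1) l <= 1.
Proof.
elim: l => [//|Q l IH] conn /=.
have := IH (path_connected_behead conn).
case: Q conn => [|a [|? ?]] conn //=; rewrite add1n ltnS leqn0 eqn0Ngt -has_count => _.
apply/hasPn=> R Rl; case/splitPr: Rl conn => m z conn.
case: R conn => [|b [|? ?]] conn //=.
have /andP [] := conn [::] ([:: a] :: rcons m [:: b]) z ltac:(by rewrite /= -cats1 -catA) isT.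
rewrite rev_cons rev_rcons rcons_cons => /ascending_ends lt_ab /ascending_ends.
by rewrite ltnNge ltnW.
Qed.

Lemma sumn_size_ge (l : seq (seq nat)) : all (fun Q => 0 < size Q) l ->
  2 * size l <= sumn (map size l) + count (fun Q => size Q == 1) l.
Proof. by elim: l => //= Q l IH /andP [Q0 /IH]; case: (size Q) Q0 => [|[|?]] //=; lia. Qed.

Lemma path_connected_size l : path_connected l -> 2 * size l <= (sumn (map size l)).+1.
Proof.
move=> conn; have := sumn_size_ge (path_connected_nonempty conn).
by have := path_connected_singletons conn; lia.
Qed.

Lemma cycle_connected_split ls r d : cycle_connected ls -> 0 < d < size ls ->
  ascending 0 (take d (rot r ls)) || ascending 0 (rev (drop d (rot r ls))).
Proof.
move=> conn /andP [d_gt0 d_lt]; apply: conn; first by rewrite cat_take_drop.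
  have : size (take d (rot r ls)) = d by rewrite size_takel // size_rot ltnW.
  by case: take => // /esym d0; rewrite d0 in d_gt0.
have : size (drop d (rot r ls)) = size ls - d by rewrite size_drop size_rot.
by case: drop => // /esym /eqP; rewrite subn_eq0 leqNgt d_lt.
Qed.

Ltac case_orders := repeat match goal with
  | H : is_true (_ || _) |- _ => case/orP: H => H
  | H : is_true (_ && _) |- _ => case/andP: H => ? H
  end; lia.

Lemma five_singletons_disconnected a b c d e :
  ~ cycle_connected [:: [:: a]; [:: b]; [:: c]; [:: d]; [:: e]].
Proof.
move=> /cycle_connected_split conn.
have := conn 0 2 isT; have := conn 2 3 isT; have := conn 1 2 isT; have := conn 3 3 isT.
rewrite /= !orbF !andbT; clear conn => *.
case_orders.
Qed.

Lemma four_singletons_pair_disconnected a b c d y z :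
  ~ cycle_connected [:: [:: a]; [:: b]; [:: c]; [:: d]; [:: y; z]].
Proof.
move=> /cycle_connected_split conn.
have := conn 0 2 isT; have := conn 2 3 isT; have := conn 1 2 isT; have := conn 3 3 isT.
have := conn 1 3 isT; have := conn 4 2 isT.
rewrite /= !orbF !andbT; clear conn => *.
case_orders.
Qed.

Lemma all_size1_map ls :
  all (fun Q => size Q == 1) ls -> ls = [seq [:: x] | x <- map (head 0) ls].
Proof. by elim: ls => //= Q ls IH /andP [/eqP Q1 /IH {1}->]; case: Q Q1 => [|x []]. Qed.

Lemma singletons_disconnected ls :
  5 <= size ls -> all (fun Q => size Q == 1) ls -> ~ cycle_connected ls.
Proof.
have [n] := ubnP (size ls); elim: n ls => // n IH [//|Q l] /= lt_ls ge5 /andP [Q1 l1].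
case: (ltngtP (size l) 4) => [|gt4|eq4]; first lia.
  by move/(@cycle_connected_rot 1); rewrite rot1_cons => /cycle_connected_contract; apply: IH.
rewrite (all_size1_map l1); case: Q Q1 => [|x []] // _.
move: eq4; rewrite -(size_map (head 0)); case: (map _ l) => [|a [|b [|c [|d []]]]] //= _.
exact: five_singletons_disconnected.
Qed.

Lemma perm_rcons_sizes (ls l : seq (seq nat)) (Q : seq nat) : perm_eq (rcons l Q) ls ->
  size ls = (size l).+1 /\ sumn (map size ls) = sumn (map size l) + size Q.
Proof.
move=> perm_l; rewrite -(perm_size perm_l) -(perm_sumn (perm_map size perm_l)).
by rewrite size_rcons map_rcons -cats1 sumn_cat /= addn0.
Qed.

Lemma five_cycle_size l (Q : seq nat) :
    size l = 4 -> all (fun R => 0 < size R) l -> 1 < size Q -> cycle_connected (rcons l Q) ->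
  7 <= sumn (map size l) + size Q.
Proof.
move=> size_l nonempty_l Q_big conn.
have := sumn_size_ge nonempty_l; have := count_size (fun R => size R == 1) l.
rewrite size_l => count_le4 sum_ge8.
have [|small_l] := leqP 5 (sumn (map size l)); first lia.
have [||eq2] := ltngtP (size Q) 2; try lia.
have ones : all (fun R => size R == 1) l by rewrite all_count size_l; lia.
move: conn; rewrite (all_size1_map ones); case: Q eq2 {Q_big} => [|y [|z []]] // _.
move: size_l; rewrite -(size_map (head 0)); case: (map _ l) => [|a [|b [|c [|d []]]]] //= _.
by move/four_singletons_pair_disconnected.
Qed.

Theorem cycle_connected_size ls :
  5 <= size ls -> cycle_connected ls -> 2 * size ls - 3 <= sumn (map size ls).
Proof.
have [n] := ubnP (size ls); elim: n ls => // n IH ls lt_ls ge5 conn.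
have [nil_ls|nil_ls] := boolP ([::] \in ls).
  have [l perm_l] := cycle_connected_rot_to nil_ls conn.
  move=> /path_connected_of_cycle/path_connected_size.
  by have [-> ->] := perm_rcons_sizes perm_l; lia.
have nonempty : all (fun Q => 0 < size Q) ls.
  by apply/allP=> -[|x Q] //; rewrite (negPf nil_ls).
have [/hasP [Q Q_ls Q_big]|] := boolP (has (fun Q => 1 < size Q) ls); last first.
  rewrite -all_predC => small; case: (singletons_disconnected ge5 _ conn).
  by apply/allP=> Q Q_ls; have := allP small Q Q_ls; have := allP nonempty Q Q_ls => /=; lia.
have [l perm_l conn_l] := cycle_connected_rot_to Q_ls conn.
have [size_ls sum_ls] := perm_rcons_sizes perm_l.
rewrite size_ls sum_ls in lt_ls ge5 *.
have nonempty_l : all (fun R => 0 < size R) l.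
  by move: nonempty; rewrite -(perm_all _ perm_l) all_rcons => /andP [].
have [ge5_l|lt5_l] := leqP 5 (size l).
  by have := IH l lt_ls ge5_l (cycle_connected_contract conn_l); lia.
by have := five_cycle_size (_ : size l = 4) nonempty_l Q_big conn_l; lia.
Qed.

Definition cycle_edge N (p : 'I_N) : {set 'I_N} := [set p; cyc_succ p].

Lemma cyc_succ_val N (p : 'I_N) : cyc_succ p = p.+1 %% N :> nat.
Proof. by []. Qed.

Lemma cyc_succ_inj N : injective (@cyc_succ N).
Proof.
move=> p q /(congr1 (@nat_of_ord N)) /eqP.
rewrite !cyc_succ_val -[p.+1]addn1 -[q.+1]addn1 eqn_modDr.
by rewrite !modn_small // => /eqP /val_inj.
Qed.

Lemma set2_eq_cases (T : finType) (a b c d : T) :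
  [set a; b] = [set c; d] -> (a = c /\ b = d) \/ (a = d /\ b = c).
Proof.
move=> eq_ab; have : a \in [set c; d] by rewrite -eq_ab set21.
have : b \in [set c; d] by rewrite -eq_ab set22.
have : c \in [set a; b] by rewrite eq_ab set21.
have : d \in [set a; b] by rewrite eq_ab set22.
by rewrite !inE => /orP [] /eqP e1 /orP [] /eqP e2 /orP [] /eqP e3 /orP [] /eqP e4; subst; auto.
Qed.

Lemma cyc_succ2_neq N (p : 'I_N) : 2 < N -> cyc_succ (cyc_succ p) != p.
Proof.
move=> N_gt2; apply/eqP=> /(congr1 (@nat_of_ord N)).
rewrite !cyc_succ_val -[(_ %% N).+1]addn1 modnDml addn1.
have lt_pN := ltn_ord p; case: (ltnP p.+2 N) => [lt|ge]; first by rewrite modn_small //; lia.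
by rewrite -(subnK ge) modnDr modn_small; lia.
Qed.

Lemma cycle_edge_inj N : 2 < N -> injective (@cycle_edge N).
Proof.
move=> N_gt2 p q /set2_eq_cases [[]//|[eq_p eq_q]].
by have := cyc_succ2_neq q N_gt2; rewrite -eq_p eq_q eqxx.
Qed.

Lemma walk_monotone N (w : nat -> 'I_N) l :
    (forall i j, i <= l -> j <= l -> w i = w j -> i = j) ->
    (forall i, i < l -> w i.+1 = cyc_succ (w i) \/ w i = cyc_succ (w i.+1)) ->
  (forall i, i < l -> w i.+1 = cyc_succ (w i)) \/
  (forall i, i < l -> w i = cyc_succ (w i.+1)).
Proof.
move=> w_inj step; have [->|l_gt0] := posnP l; first by left.
have w_inj2 i : i.+1 < l -> w i = w i.+2 -> False by move=> lt_il /w_inj; lia.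
case: (step 0 l_gt0) => [cw|ccw]; [left|right]; elim=> [//|i IH] lt_il;
  case: (step i.+1 lt_il) => // turn; case: (w_inj2 i lt_il).
  exact/cyc_succ_inj/(etrans (esym (IH (ltnW lt_il)))).
by rewrite (IH (ltnW lt_il)) turn.
Qed.

Lemma clockwise_val N (w : nat -> 'I_N) l :
  (forall i, i < l -> w i.+1 = cyc_succ (w i)) -> forall i, i <= l -> w i = (w 0 + i) %% N :> nat.
Proof.
move=> cw; elim=> [_|i IH lt_il]; first by rewrite addn0 modn_small.
rewrite (cw i lt_il) cyc_succ_val IH; last exact: ltnW.
by rewrite -[(_ %% N).+1]addn1 modnDml addn1 addnS.
Qed.

Lemma counterclockwise_val N (w : nat -> 'I_N) l : l <= N ->
    (forall i, i < l -> w i = cyc_succ (w i.+1)) ->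
  forall i, i <= l -> w i = (w 0 + (N - i)) %% N :> nat.
Proof.
move=> le_lN ccw.
have shift i : i <= l -> (w i + i) %% N = w 0.
  elim: i => [_|i IH lt_il]; first by rewrite addn0 modn_small.
  rewrite -IH; last exact: ltnW.
  by rewrite (ccw i lt_il) cyc_succ_val modnDml addSnnS.
move=> i le_il; rewrite -(shift i le_il) modnDml -addnA subnKC; last exact: leq_trans le_lN.
by rewrite modnDr modn_small.
Qed.

Lemma nth_rot_mod (T : Type) (x0 : T) r (s : seq T) i : r < size s -> i < size s ->
  nth x0 (rot r s) i = nth x0 s ((r + i) %% size s).
Proof.
move=> lt_r lt_i; rewrite nth_cat size_drop; case: ltnP => [lt|ge].
  by rewrite nth_drop modn_small //; lia.
rewrite nth_take; last by lia.
have -> : r + i = (r + i - size s) + size s by lia.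
by rewrite modnDr modn_small; [congr nth; lia | lia].
Qed.

Section CycleLabelling.
Variables (N T : nat) (E : time_edges 'I_N T).
Hypothesis E_cycle : forall e, e \in E -> exists p : 'I_N, e.1 = cycle_edge p.

Definition edge_labels (p : 'I_N) : seq nat :=
  [seq nat_of_ord t | t in [pred t | (cycle_edge p, t) \in E]].

Definition labelling : seq (seq nat) := map edge_labels (enum 'I_N).

Lemma size_labelling : size labelling = N.
Proof. by rewrite size_map size_enum_ord. Qed.

Lemma nth_labelling (p : 'I_N) : nth [::] labelling p = edge_labels p.
Proof. by rewrite (nth_map p) ?size_enum_ord // nth_ord_enum. Qed.

Lemma mem_edge_labels p t : (cycle_edge p, t) \in E -> nat_of_ord t \in edge_labels p.
Proof. by move=> Et; apply: image_f. Qed.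

Lemma card_labelling : 2 < N -> #|E| = sumn (map size labelling).
Proof.
move=> N_gt2; pose edge (x : 'I_N * 'I_T.+1) := (cycle_edge x.1, x.2).
have edge_inj : injective edge by move=> [p t] [q t'] [/(cycle_edge_inj N_gt2) -> ->].
have -> : E = edge @: [set x | edge x \in E].
  apply/setP=> e; apply/idP/imsetP=> [Ee|[x]]; last by rewrite inE => + ->.
  have [p e1] := E_cycle Ee; exists (p, e.2); last by rewrite /edge /= -e1 -surjective_pairing.
  by rewrite inE /edge /= -e1 -surjective_pairing.
rewrite card_imset // -sum1_card sumnE !big_map.
rewrite (eq_bigl (fun x => true && (x.2 \in [pred t | edge (x.1, t) \in E]))); last first.
  by move=> [p t]; rewrite /= inE.
rewrite -(pair_big_dep predT (fun p => [pred t | edge (p, t) \in E]) (fun _ _ => 1)) /=.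
by apply: eq_bigr => p _; rewrite sum1_card size_image.
Qed.

Lemma cycle_path_labels (u v : 'I_N) : strict_temporal_path E u v ->
  exists ts : seq nat, [/\ sorted ltn ts, size ts < N &
    ((u + size ts) %% N = v /\
       forall i, i < size ts -> nth 0 ts i \in nth [::] (rot u labelling) i) \/
    ((u + (N - size ts)) %% N = v /\
       forall i, i < size ts -> nth 0 ts i \in nth [::] (rev (rot u labelling)) i)].
Proof.
case=> vs [ts [size_ts uniq_vs last_vs sorted_ts mem_E]].
exists (map (@nat_of_ord _) ts); rewrite size_map size_ts.
set w := fun i => nth u (u :: vs) i.
have w_inj i j : i <= size vs -> j <= size vs -> w i = w j -> i = j.
  by move=> le_i le_j /eqP; rewrite nth_uniq // => /eqP.
have step i : i < size vs -> w i.+1 = cyc_succ (w i) \/ w i = cyc_succ (w i.+1).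
  move=> lt_i; have [p] := E_cycle (mem_E i lt_i).
  by rewrite /w /= => /set2_eq_cases [[-> ->]|[-> ->]]; auto.
have lt_N : size vs < N.
  by have := uniq_leq_size uniq_vs (fun p _ => mem_enum 'I_N p); rewrite size_enum_ord.
have w_end : w (size vs) = v by rewrite /w -last_nth.
have label i : i < size vs -> nth 0 (map (@nat_of_ord _) ts) i = nth ord0 ts i.
  by move=> lt_i; rewrite (nth_map ord0) ?size_ts.
split=> //.
case: (walk_monotone w_inj step) => [cw|ccw]; [left|right]; split.
- by rewrite -w_end (clockwise_val cw).
- move=> i lt_i; rewrite label // nth_rot_mod ?size_labelling //; last exact: ltn_trans lt_N.
  rewrite -(clockwise_val cw (ltnW lt_i)) nth_labelling; apply: mem_edge_labels.
  by rewrite /cycle_edge -cw //; apply: mem_E.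
- by rewrite -w_end (counterclockwise_val (ltnW lt_N) ccw).
- move=> i lt_i; rewrite label // nth_rev size_rot size_labelling; last exact: ltn_trans lt_N.
  rewrite nth_rot_mod ?size_labelling; [|exact: ltn_ord|lia].
  rewrite -(counterclockwise_val (ltnW lt_N) ccw) // nth_labelling; apply: mem_edge_labels.
  by rewrite /cycle_edge setUC -ccw //; apply: mem_E.
Qed.

Lemma labelling_connected : strictly_temporally_connected E -> cycle_connected labelling.
Proof.
move=> conn r x y rot_xy x0 y0.
have size_xy : size x + size y = N by rewrite -size_cat -rot_xy size_rot size_labelling.
have x_gt0 : 0 < size x by rewrite lt0n size_eq0.
have y_gt0 : 0 < size y by rewrite lt0n size_eq0.
wlog lt_rN : r rot_xy / r < N.
  move=> wlog_r; case: (ltnP r N) => [|ge_rN]; first exact: wlog_r.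
  by apply: (wlog_r 0); rewrite ?rot0 -?rot_xy ?rot_oversize ?size_labelling //; lia.
have N_gt0 : 0 < N by lia.
pose u : 'I_N := Ordinal lt_rN; pose v : 'I_N := Ordinal (ltn_pmod (r + size x) N_gt0).
have uv : u != v.
  apply/eqP=> /(congr1 (@nat_of_ord N)) /=; case: (ltnP (r + size x) N) => [lt|ge].
    by rewrite modn_small //; lia.
  by rewrite -(subnK ge) modnDr modn_small; lia.
have [ts [sorted_ts lt_N [[v_cw mem_cw]|[v_ccw mem_ccw]]]] := cycle_path_labels (conn u v uv).
- have size_ts : size ts = size x.
    by move/eqP: v_cw; rewrite eqn_modDl !modn_small //; [move/eqP | lia].
  apply/orP; left; apply: (ascending_of_sorted sorted_ts) => // i lt_i.
  by move: (mem_cw i); rewrite rot_xy nth_cat lt_i size_ts => ->.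
- have size_ts : size ts = size y.
    move/eqP: v_ccw; rewrite eqn_modDl (modn_small (_ : size x < N)); last lia.
    have [ts0|ts_gt0] := posnP (size ts); first by rewrite ts0 subn0 modnn => /eqP; lia.
    by rewrite modn_small => [/eqP|]; lia.
  apply/orP; right; apply: (ascending_of_sorted sorted_ts) => [||i]; rewrite ?size_rev //.
  by move=> lt_i; move: (mem_ccw i); rewrite size_ts rot_xy rev_cat nth_cat size_rev lt_i; apply.
Qed.

End CycleLabelling.

Lemma strict_temporal_path_of_walk (V : finType) T (E : time_edges V T)
    (w : nat -> V) (t : nat -> 'I_T.+1) k :
    (forall i j, i <= k -> j <= k -> w i = w j -> i = j) ->
    (forall i, i.+1 < k -> t i < t i.+1) ->
    (forall i, i < k -> ([set w i; w i.+1], t i) \in E) ->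
  strict_temporal_path E (w 0) (w k).
Proof.
move=> w_inj t_incr mem_E; exists (map w (iota 1 k)), (map t (iota 0 k)).
have w_iota : w 0 :: map w (iota 1 k) = map w (iota 0 k.+1) by [].
split.
- by rewrite !size_map !size_iota.
- rewrite w_iota map_inj_in_uniq ?iota_uniq // => i j.
  by rewrite !mem_iota !add0n => ? ?; apply: w_inj.
- rewrite last_map; case: k {w_inj t_incr mem_E w_iota} => // k.
  by rewrite -[k.+1]addn1 iotaD last_cat /= addnC.
- rewrite -map_comp; apply: (@homo_sorted_in _ _ (gtn k)); last exact: iota_ltn_sorted.
    apply: homo_ltn_in => [y x z|i j _ lt_jk m /andP [_ lt_mj]|i _]; first exact: ltn_trans.
      exact: ltn_trans lt_mj lt_jk.
    exact: t_incr.
  by apply/allP=> i; rewrite mem_iota.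
- move=> i; rewrite size_map size_iota => lt_ik.
  rewrite w_iota !(nth_map 0) ?size_iota //; last exact: ltnW.
  by rewrite !nth_iota ?add1n //; [apply: mem_E | apply: ltnW].
Qed.

Section MirroredPath.
Variables (N T : nat) (lab : nat -> nat).
Hypothesis N_gt2 : 2 < N.
Hypothesis lab_incr : forall i, lab i < lab i.+1.
Hypothesis lab_le : forall i, i.+1 < N -> lab i <= T.

Let N_gt0 : 0 < N := ltnW (ltnW N_gt2).

Definition path_vertex (i : nat) : 'I_N := Ordinal (ltn_pmod i N_gt0).

Definition path_edge (i : nat) : {set 'I_N} := cycle_edge (path_vertex i).

(* Path edge [i] between the vertices [i] and [i + 1] carries the label [lab i], increasing from
   vertex 0 to vertex N - 1, and the mirrored label [lab (N - 2 - i)], increasing backwards. *)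
Definition mirrored_spanner : time_edges 'I_N T :=
  [set (path_edge i, inord (lab i)) | i : 'I_N.-1] :|:
  [set (path_edge i, inord (lab (N.-2 - i))) | i : 'I_N.-1].

Lemma path_vertex_val i : i < N -> path_vertex i = i :> nat.
Proof. exact: modn_small. Qed.

Lemma path_vertex_ord (p : 'I_N) : path_vertex p = p.
Proof. by apply: val_inj; rewrite /= modn_small. Qed.

Lemma cyc_succ_path_vertex i : cyc_succ (path_vertex i) = path_vertex i.+1.
Proof. by apply: val_inj; rewrite /= -[(_ %% N).+1]addn1 modnDml addn1. Qed.

Lemma path_vertex_inj i j : i < N -> j < N -> path_vertex i = path_vertex j -> i = j.
Proof. by move=> lt_i lt_j /(congr1 (@nat_of_ord N)); rewrite !path_vertex_val. Qed.

Lemma path_edge_inj i j : i < N -> j < N -> path_edge i = path_edge j -> i = j.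
Proof. by move=> lt_i lt_j /(cycle_edge_inj N_gt2) /path_vertex_inj; apply. Qed.

Lemma inord_lab i : i.+1 < N -> @inord T (lab i) = lab i :> nat.
Proof. by move=> lt_i; rewrite inordK // ltnS lab_le. Qed.

Lemma lab_homo : {homo lab : i j / i < j}.
Proof. exact: homo_ltn ltn_trans lab_incr. Qed.

Lemma lab_inj : injective lab.
Proof. exact/incn_inj/leq_mono/lab_homo. Qed.

Lemma card_mirrored_spanner : ~~ odd N -> #|mirrored_spanner| = 2 * N - 3.
Proof.
move=> N_even; have N_half : N = 2 * N./2.
  by rewrite -{1}(odd_double_half N) (negbTE N_even) add0n mul2n.
have lt_N (i : 'I_N.-1) : i.+1 < N by have := ltn_ord i; lia.
have card_half g : #|[set (path_edge i, g i) | i : 'I_N.-1]| = N.-1.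
  rewrite card_imset ?card_ord // => i j [/path_edge_inj eq_ij _].
  by apply/val_inj/eq_ij; apply: ltnW.
have lt_mid : (N./2).-1 < N.-1 by lia.
pose mid := Ordinal lt_mid.
have cap : [set (path_edge i, inord (lab i) : 'I_T.+1) | i : 'I_N.-1] :&:
             [set (path_edge i, inord (lab (N.-2 - i))) | i : 'I_N.-1] =
           [set (path_edge mid, inord (lab mid))].
  apply/setP=> e; rewrite !inE; apply/andP/eqP=> [[/imsetP [i _ ->] /imsetP [j _ [ij]]]|->].
    have eq_ij : i = j :> nat by apply: path_edge_inj ij; apply: ltnW.
    move/(congr1 (@nat_of_ord _)).
    rewrite (inord_lab (lt_N i)) inord_lab => [/lab_inj eq_f|]; last lia.
    by have -> : i = mid by apply: val_inj => /=; lia.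
  split; apply/imsetP; exists mid => //.
  by rewrite /= (_ : N.-2 - N./2.-1 = N./2.-1) //; lia.
by rewrite cardsU !card_half cap cards1; lia.
Qed.

Lemma mirrored_spanner_connected : strictly_temporally_connected mirrored_spanner.
Proof.
move=> u v uv; have lt_uN := ltn_ord u; have lt_vN := ltn_ord v.
rewrite -(path_vertex_ord u) -(path_vertex_ord v).
case: (ltngtP u v) => [lt_uv|lt_vu|eq_uv]; last by rewrite (val_inj eq_uv) eqxx in uv.
- have := strict_temporal_path_of_walk (E := mirrored_spanner)
    (w := fun j => path_vertex (u + j)) (t := fun j => inord (lab (u + j))) (k := v - u).
  rewrite addn0 subnKC; last exact: ltnW.
  apply=> [i j le_i le_j /path_vertex_inj|i lt_i|i lt_i]; first lia.
  + by rewrite !inord_lab ?addnS ?lab_incr //; lia.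
  + rewrite /= addnS -cyc_succ_path_vertex; apply/setUP; left.
    have lt_ui : u + i < N.-1 by lia.
    by apply/imsetP; exists (Ordinal lt_ui).
- have := strict_temporal_path_of_walk (E := mirrored_spanner)
    (w := fun j => path_vertex (u - j)) (t := fun j => inord (lab (N.-2 - (u - j.+1))))
    (k := u - v).
  rewrite subn0 subKn; last exact: ltnW.
  apply=> [i j le_i le_j /path_vertex_inj|i lt_i|i lt_i]; first lia.
  + by rewrite !inord_lab; [apply: lab_homo| |]; lia.
  + have -> : path_vertex (u - i) = cyc_succ (path_vertex (u - i.+1)).
      by rewrite cyc_succ_path_vertex; congr path_vertex; lia.
    rewrite setUC; apply/setUP; right.
    have lt_ui : u - i.+1 < N.-1 by lia.
    by apply/imsetP; exists (Ordinal lt_ui).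
Qed.

Lemma mem_mirrored_spanner e : e \in mirrored_spanner ->
  exists i j, [/\ i.+1 < N, j.+1 < N & e = (path_edge i, inord (lab j))].
Proof.
have lt_N (i : 'I_N.-1) : i.+1 < N by have := ltn_ord i; lia.
case/setUP=> /imsetP [i _ ->]; first by exists i, i.
by exists i, (N.-2 - i); split=> //; lia.
Qed.
End MirroredPath.

(* The first half of the path takes its labels in L_down, the second half in L_up. *)
Definition spanner_label (k n m s i : nat) : nat :=
  if i < 3 * s %/ 2 then 5 + i else 3 * m %/ 2 + 4 * k * n + 5 + (i - 3 * s %/ 2).

Lemma spanner_label_incr k n m s i :
  s <= m -> spanner_label k n m s i < spanner_label k n m s i.+1.
Proof. by rewrite /spanner_label => le_sm; do 2!case: ifP; lia. Qed.

Lemma spanner_label_le k n m s i : ~~ odd m -> ~~ odd s -> s <= m ->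
  i.+1 < 3 * s -> spanner_label k n m s i <= cycT k n m.
Proof.
move=> /even_halfK m_half /even_halfK s_half le_sm.
by rewrite /spanner_label /cycT; case: ifP; lia.
Qed.

Lemma spanner_label_range k n m s i : ~~ odd s -> i.+1 < 3 * s ->
  in_Ldown s (spanner_label k n m s i) || in_Lup k n m s (spanner_label k n m s i).
Proof.
move=> /even_halfK s_half.
by rewrite /spanner_label /in_Ldown /in_Lup; case: ifP; lia.
Qed.

Theorem lemma16 (k n m s : nat) :
  0 < k -> 0 < n -> 0 < m -> ~~ odd m ->
  ~~ odd s -> 2 <= s -> s <= m ->
  (exists E' : time_edges 'I_(3 * s) (cycT k n m),
      strict_temporal_spanner (cycleE k n m s) E' /\ #|E'| = 6 * s - 3) /\
  (forall E' : time_edges 'I_(3 * s) (cycT k n m),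
      strict_temporal_spanner (cycleE k n m s) E' -> 6 * s - 3 <= #|E'|).
Proof.
move=> _ _ _ m_even s_even s_ge2 s_le_m; have N_gt2 : 2 < 3 * s by lia.
split.
- have lab_incr i := @spanner_label_incr k n m s i s_le_m.
  have lab_le i := @spanner_label_le k n m s i m_even s_even s_le_m.
  exists (mirrored_spanner (cycT k n m) (spanner_label k n m s) N_gt2); split; last first.
    by rewrite card_mirrored_spanner ?oddM ?(negbTE s_even) ?andbF //; lia.
  split; last exact: mirrored_spanner_connected.
  apply/subsetP=> e /mem_mirrored_spanner [i [j [_ lt_j ->]]]; rewrite inE /=.
  rewrite (inord_lab lab_le) // spanner_label_range // andbT.
  by apply/existsP; exists (path_vertex N_gt2 i).
- move=> E' [sub_E' conn_E'].
  have E'_cycle e : e \in E' -> exists p, e.1 = cycle_edge p.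
    by move/(subsetP sub_E'); rewrite inE => /andP [/existsP [p /eqP ->] _]; exists p.
  rewrite (card_labelling E'_cycle N_gt2).
  have := cycle_connected_size _ (labelling_connected E'_cycle conn_E').
  by rewrite size_labelling; lia.
Qed.
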